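(* Let $m\ge2$ and $\theta_c=\frac{m-2}{3m-2}$. There exists a constant $A=A(m)>0$ such that for every $\theta\in(\theta_c,1]$ and every $n\ge1$, $$\rho(\mathrm{Plu},m,n,\theta)\le 2\,m!\,e^{-A(\theta-\theta_c)^2 n}.$$
   Context: A ranking is a strict total order on the candidates. A discrete profile consists of candidates, $n$ voters and a ranking $P_v$ per voter. Plurality: the score of $c$ is the number of voters ranking $c$ first; the highest score wins, ties broken by an arbitrary fixed rule. CM: a rule $f$ is coalitionally manipulable in a discrete profile $P$ if there is a discrete $Q$ with the same candidates and voters such that $f(Q)\ne f(P)$ and every voter $v$ with $Q_v\ne P_v$ prefers $f(Q)$ to $f(P)$ according to $P_v$. Perturbed Culture ($m,n\ge1$, $\theta\in(0,1]$): random discrete profile with candidates $\{1,\dots,m\}$, voters $\{1,\dots,n\}$, each voter independently having ranking $1\succ\cdots\succ m$ with probability $\theta$ and a uniformly random ranking with probability $1-\theta$. $\rho(f,m,n,\theta)$: probability that $f$ is CM in the random profile. *)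

From HB Require Import structures.
From mathcomp Require Import all_boot all_order all_fingroup all_algebra.
From mathcomp Require Import reals.
From mathcomp Require Import sequences exp.
Set Implicit Arguments. Unset Strict Implicit. Unset Printing Implicit Defensive.
Import Order.TTheory GRing.Theory Num.Theory.
Local Open Scope ring_scope.

(* Candidates: 'I_m (candidate i+1 of the paper is the ordinal i).
   Voters: 'I_n.
   A ranking is a permutation s : {perm 'I_m}; s k is the candidate placed
   at position k (position 0 = top). *)
Definition ranking (m : nat) := {perm 'I_m}.
Definition profile (m n : nat) := {ffun 'I_n -> ranking m}.

Definition pos m (s : ranking m) (c : 'I_m) : nat := nat_of_ord ((s^-1)%g c).

Definition prefers m (s : ranking m) (a b : 'I_m) : bool := (pos s a < pos s b)%N.

Definition plu_score m n (P : profile m n) (c : 'I_m) : nat :=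
  #|[set v : 'I_n | pos (P v) c == 0%N]|.

Definition plu_top m n (P : profile m n) : {set 'I_m} :=
  [set c | [forall d, plu_score P d <= plu_score P c]%N].

Definition tiebreak_ok m (tb : {set 'I_m} -> 'I_m) : Prop :=
  forall S : {set 'I_m}, S != set0 -> tb S \in S.

Definition plurality m n (tb : {set 'I_m} -> 'I_m) (P : profile m n) : 'I_m :=
  tb (plu_top P).

Definition CM m n (f : profile m n -> 'I_m) (P : profile m n) : bool :=
  [exists Q : profile m n,
     (f Q != f P) && [forall v, (Q v != P v) ==> prefers (P v) (f Q) (f P)]].

Definition pc_prob (R : realType) m n (theta : R) (P : profile m n) : R :=
  \prod_(v : 'I_n)
     (theta * (P v == 1%g)%:R + (1 - theta) / (m`!)%:R).

Definition rho (R : realType) m n (f : profile m n -> 'I_m) (theta : R) : R :=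
  \sum_(P : profile m n) pc_prob theta P * (CM f P)%:R.

Definition theta_c (R : realType) (m : nat) : R :=
  (m%:R - 2) / (3 * m%:R - 2).

From HB Require Import structures.
From mathcomp Require Import all_boot all_order all_fingroup all_algebra.
From mathcomp Require Import reals.
From mathcomp Require Import sequences exp.
From mathcomp Require Import ring lra.
Import Order.TTheory GRing.Theory Num.Theory.
Local Open Scope ring_scope.

(* Candidate [ord0] is the one ranked first by the dominant ranking [1].  If
   Plurality is coalitionally manipulable at a profile, some rival c either
   scores at least as much as [ord0], or is preferred to [ord0] by at least as
   many voters as rank [ord0] first.  For a single perturbed-culture voter, the
   probability of "c first" (resp. "c above ord0") minus that of "ord0 first"
   is at most -(theta - theta_c); theta_c is precisely where the second
   difference vanishes.  A Chernoff bound over the n independent voters gives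
   each of these 2(m - 1) events probability at most exp(-(theta - theta_c)^2 n / 4),
   and a union bound concludes with A = 1/4. *)

Lemma sum_ffun_prod (R : comPzSemiRingType) (T : finType) n (f : T -> R) :
  \sum_(P : {ffun 'I_n -> T}) \prod_v f (P v) = (\sum_t f t) ^+ n.
Proof. by rewrite -(bigA_distr_bigA (fun _ : 'I_n => f)) prodr_const card_ord. Qed.

Lemma sumr_mul_natb (R : pzSemiRingType) (T : finType) (F : T -> R) (E : pred T) :
  \sum_t F t * (E t)%:R = \sum_(t | E t) F t.
Proof.
by rewrite [RHS]big_mkcond; apply: eq_bigr => t _; case: (E t); rewrite ?mulr1 ?mulr0.
Qed.

Lemma union_bound {R : numDomainType} {I T : finType} {q : T -> R} {E : pred T}
    (J : pred I) (F : I -> pred T) :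
  (forall x, 0 <= q x) -> (forall x, E x -> exists2 i, J i & F i x) ->
  \sum_(x | E x) q x <= \sum_(i | J i) \sum_(x | F i x) q x.
Proof.
move=> q_ge0 cover.
rewrite (exchange_big_dep predT) //= [X in X <= _]big_mkcond /=.
apply: ler_sum => x _; case Ex: (E x); last exact: sumr_ge0.
have [i Ji Fix] := cover x Ex.
by rewrite (bigD1 i) ?Ji ?Fix //= lerDl sumr_ge0.
Qed.

Section ChernoffCount.
Variables (R : realType) (T : finType) (p : T -> R) (g h : pred T).
Hypotheses (p_ge0 : forall t, 0 <= p t) (p_sum1 : \sum_t p t = 1).

(* Over a profile these multiply to (1 + s) ^ (#g - #h), a discrete exponential
   moment playing the role of exp(lambda (#g - #h)) in the Chernoff argument. *)
Definition tilt (s : R) (t : T) : R :=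
  (if g t then 1 + s else 1) / (if h t then 1 + s else 1).

Lemma count_le_le_prod_tilt n s (P : {ffun 'I_n -> T}) : 0 <= s ->
  ((#|[set v | h (P v)]| <= #|[set v | g (P v)]|)%N%:R : R)
    <= \prod_v tilt s (P v).
Proof.
move=> s_ge0; have s1_gt0 : 0 < 1 + s by lra.
have prod_if (q : pred T) : \prod_v (if q (P v) then 1 + s else 1)
    = (1 + s) ^+ #|[set v | q (P v)]|.
  by rewrite -prodr_const -big_mkcond; apply: eq_bigl => v; rewrite inE.
rewrite prodf_div !prod_if; case: leqP => [hg|_]; last first.
  by rewrite divr_ge0 // exprn_ge0 // ltW.
by rewrite ler_pdivlMr ?exprn_gt0 // mul1r ler_weXn2l //; lra.
Qed.

Lemma mean_tilt_le s : 0 <= s ->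
  \sum_t p t * tilt s t
    <= 1 + s * (\sum_(t | g t) p t - \sum_(t | h t) p t) + s ^+ 2.
Proof.
move=> s_ge0.
have tilt_le t : tilt s t <= 1 + s * (g t)%:R + (s ^+ 2 - s) * (h t)%:R.
  rewrite /tilt; case: (g t); case: (h t); rewrite /= ?mulr1 ?mulr0 ?addr0 ?divr1.
  - by rewrite divff ?gt_eqF //; nra.
  - by [].
  - by rewrite ler_pdivrMr; nra.
  - by [].
apply: le_trans (_ : \sum_t p t * (1 + s * (g t)%:R + (s ^+ 2 - s) * (h t)%:R) <= _).
  by apply: ler_sum => t _; apply: ler_wpM2l.
under eq_bigr => t _ do
  rewrite !mulrDr mulr1 (mulrCA (p t) s) (mulrCA (p t) (s ^+ 2 - s)).
rewrite !big_split /= -!mulr_sumr !sumr_mul_natb p_sum1.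
have ph_le1 : \sum_(t | h t) p t <= 1.
  by rewrite -p_sum1 [X in _ <= X](bigID h) /= lerDl sumr_ge0.
have ph_ge0 : 0 <= \sum_(t | h t) p t by exact: sumr_ge0.
nra.
Qed.

Lemma chernoff_count_le n (d : R) : 0 < d ->
  \sum_(t | g t) p t - \sum_(t | h t) p t <= - d ->
  \sum_(P : {ffun 'I_n -> T} | (#|[set v | h (P v)]| <= #|[set v | g (P v)]|)%N)
      \prod_v p (P v)
    <= expR (- (d ^+ 2 / 4 * n%:R)).
Proof.
move=> d_gt0 margin; pose s := d / 2.
have s_ge0 : 0 <= s by rewrite divr_ge0 // ltW.
have mean_le : \sum_t p t * tilt s t <= 1 - d ^+ 2 / 4.
  apply: le_trans (@mean_tilt_le s s_ge0) _; rewrite /s; nra.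
have mean_ge0 : 0 <= \sum_t p t * tilt s t.
  by apply: sumr_ge0 => t _; rewrite mulr_ge0 // /tilt divr_ge0 //; case: ifP => _; lra.
rewrite -sumr_mul_natb.
apply: le_trans (_ : \sum_(P : {ffun 'I_n -> T}) \prod_v (p (P v) * tilt s (P v)) <= _).
  apply: ler_sum => P _; rewrite big_split /= ler_wpM2l ?prodr_ge0 //.
  exact: count_le_le_prod_tilt.
rewrite (sum_ffun_prod _ _ _ (fun t => p t * tilt s t)) -mulNr expRM_natr.
apply: le_trans (_ : (1 - d ^+ 2 / 4) ^+ n <= _).
  by rewrite lerXn2r ?nnegrE //; lra.
rewrite lerXn2r ?nnegrE ?expR_ge0 //; first lra.
by apply: le_trans (expR_ge1Dx _); rewrite addrC.
Qed.

End ChernoffCount.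

Arguments chernoff_count_le {R T p} g h.

Lemma posM {m} (s t : ranking m) c : pos (s * t)%g c = pos s (t^-1 c)%g.
Proof. by rewrite /pos invMg permM. Qed.

Lemma pos1 {m} (c : 'I_m) : pos 1%g c = c.
Proof. by rewrite /pos invg1 perm1. Qed.

Lemma pos_inj {m} (s : ranking m) : injective (pos s).
Proof. by move=> c d /val_inj/perm_inj. Qed.

Lemma pos_eq0 {m} (s : ranking m.+1) c : (pos s c == 0%N) = (s ord0 == c).
Proof.
apply/eqP/eqP => [pos0 | <-]; last by rewrite /pos permK.
by rewrite -(permKV s c); congr (s _); apply: val_inj.
Qed.

Lemma prefers_of_first {m} (s : ranking m) c a :
  pos s c = 0%N -> c != a -> prefers s c a.
Proof.
move=> c_first ca; rewrite /prefers c_first lt0n; apply: contra ca => /eqP a_first.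
by apply/eqP; apply: (pos_inj s); rewrite c_first a_first.
Qed.

Lemma card_mulg_preim {m} (Q : pred (ranking m)) (t : ranking m) :
  #|[set s : ranking m | Q (s * t)%g]| = #|[set s | Q s]|.
Proof.
by rewrite -[RHS](card_preimset _ (mulIg t)); apply: eq_card => s; rewrite !inE.
Qed.

Lemma card_first_eq {m} (c d : 'I_m) :
  #|[set s : ranking m | pos s c == 0%N]| = #|[set s : ranking m | pos s d == 0%N]|.
Proof.
rewrite -(card_mulg_preim _ (tperm c d)); apply: eq_card => s.
by rewrite !inE posM tpermV tpermL.
Qed.

Lemma card_prefers_sym {m} (c a : 'I_m) :
  #|[set s : ranking m | prefers s c a]| = #|[set s : ranking m | prefers s a c]|.
Proof.
rewrite -(card_mulg_preim _ (tperm c a)); apply: eq_card => s.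
by rewrite !inE /prefers !posM tpermV tpermL tpermR.
Qed.

Lemma card_first {m} (c : 'I_m.+1) :
  (m.+1 * #|[set s : ranking m.+1 | pos s c == 0%N]| = m.+1`!)%N.
Proof.
rewrite -card_Sn -[#|{perm _}|]sum1_card.
rewrite (partition_big (fun s : ranking m.+1 => s ord0) xpredT) //=.
rewrite (eq_bigr (fun=> #|[set s : ranking m.+1 | pos s c == 0%N]|)).
  by rewrite sum_nat_const card_ord.
move=> d _; rewrite (card_first_eq c d) -sum1_card; apply: eq_bigl => s.
by rewrite inE pos_eq0.
Qed.

Lemma card_prefers {m} {c a : 'I_m} : c != a ->
  (2 * #|[set s : ranking m | prefers s c a]| = m`!)%N.
Proof.
move=> ca; rewrite mul2n -addnn {2}card_prefers_sym -card_Sn.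
rewrite -(cardsC [set s : ranking m | prefers s c a]); congr (_ + _)%N.
apply: eq_card => s; rewrite !inE /prefers -leqNgt (leq_eqVlt (pos s a)).
case: eqP => //= /pos_inj ac; by move: ca; rewrite ac eqxx.
Qed.

Lemma plurality_score_max {m n} {tb : {set 'I_m} -> 'I_m} :
  tiebreak_ok tb -> forall (P : profile m n) d,
  (plu_score P d <= plu_score P (plurality tb P))%N.
Proof.
move=> tb_ok P d; have : plurality tb P \in plu_top P.
  apply: tb_ok; apply/set0Pn; exists [arg max_(c > d) plu_score P c].
  rewrite /plu_top inE; case: arg_maxnP => // c _ c_max.
  by apply/forallP => e; exact: c_max.
by rewrite /plu_top inE => /forallP.
Qed.

(* Voters ranking [a] first never join a coalition against the winner [a], and
   a voter ranking the new winner c first either did so before or prefers c to a. *)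
Lemma plurality_CM_cases {m n} {tb : {set 'I_m} -> 'I_m} (a : 'I_m) (P : profile m n) :
  tiebreak_ok tb -> CM (plurality tb) P ->
  exists2 c, c != a &
    (plu_score P a <= plu_score P c)%N ||
    (plu_score P a <= #|[set v | prefers (P v) c a]|)%N.
Proof.
move=> tb_ok /existsP [Q /andP [winQ_neq /forallP sincere]].
have score_max := plurality_score_max tb_ok.
have [winP | winP] := eqVneq (plurality tb P) a; last first.
  by exists (plurality tb P) => //; rewrite score_max.
set c := plurality tb Q; exists c; first by rewrite -winP.
have a_first_stays : (plu_score P a <= plu_score Q a)%N.
  apply: subset_leq_card; apply/subsetP => v; rewrite !inE => /eqP a_first.
  have := sincere v; case: eqP => [-> _|_ /=]; first exact/eqP.
  by rewrite winP /prefers a_first.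
have c_first_prefers : (plu_score Q c <= #|[set v | prefers (P v) c a]|)%N.
  apply: subset_leq_card; apply/subsetP => v; rewrite !inE => /eqP c_first.
  have := sincere v; case: eqP => [QP _|_] /=; last by rewrite -/c winP.
  by apply: prefers_of_first; [rewrite -QP | rewrite -winP].
apply/orP; right; apply: leq_trans a_first_stays _.
exact: leq_trans (score_max _ Q a) c_first_prefers.
Qed.

Section PerturbedVoter.
Variables (R : realType) (m : nat) (theta : R).

Definition pc_weight (s : ranking m) : R :=
  theta * (s == 1%g)%:R + (1 - theta) / (m`!)%:R.

Lemma pc_probE n (P : profile m n) : pc_prob theta P = \prod_v pc_weight (P v).
Proof. by []. Qed.

Lemma pc_weight_ge0 s : 0 <= theta <= 1 -> 0 <= pc_weight s.
Proof.
case/andP=> theta_ge0 theta_le1.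
by apply: addr_ge0; [apply: mulr_ge0 | apply: divr_ge0]; rewrite ?subr_ge0.
Qed.

Lemma pc_prob_ge0 n (P : profile m n) : 0 <= theta <= 1 -> 0 <= pc_prob theta P.
Proof. by move=> theta01; apply: prodr_ge0 => v _; exact: pc_weight_ge0. Qed.

Lemma sum_pc_weight (E : pred (ranking m)) :
  \sum_(s | E s) pc_weight s
    = theta * (E 1%g)%:R + (1 - theta) * #|[set s | E s]|%:R / (m`!)%:R.
Proof.
have sum_pick1 : \sum_(s | E s) ((s == 1%g)%:R : R) = (E 1%g)%:R.
  rewrite big_mkcond (bigD1 1%g) //= eqxx big1 ?addr0; first by case: (E 1%g).
  by move=> s /negbTE ->; case: (E s).
have sum_const : \sum_(s | E s) (1 - theta) / (m`!)%:R
    = (1 - theta) / (m`!)%:R *+ #|[set s | E s]|.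
  by rewrite -sumr_const; apply: eq_bigl => s; rewrite inE.
rewrite big_split /= -mulr_sumr sum_pick1 sum_const mulr_natr; ring.
Qed.

Lemma sum_pc_weightT : \sum_s pc_weight s = 1.
Proof.
rewrite (sum_pc_weight predT) cardsT card_Sn /= mulr1 mulfK.
  by rewrite addrC subrK.
by rewrite pnatr_eq0 -lt0n fact_gt0.
Qed.

End PerturbedVoter.

Arguments pc_weight {R m} theta s.

Lemma pc_first_margin (R : realType) m (theta : R) (c : 'I_m.+1) : c != ord0 ->
  \sum_(s | pos s c == 0%N) pc_weight theta s
    - \sum_(s : ranking m.+1 | pos s ord0 == 0%N) pc_weight theta s = - theta.
Proof.
move=> c_ne0; rewrite !sum_pc_weight !pos1 (card_first_eq c ord0) eqxx.
have -> : (c == 0%N :> nat) = false.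
  by apply/negbTE; apply: contra c_ne0 => /eqP c0; apply/eqP/val_inj.
rewrite mulr0 mulr1; ring.
Qed.

Lemma pc_prefers_margin (R : realType) m (theta : R) (c : 'I_m.+1) : c != ord0 ->
  \sum_(s | prefers s c ord0) pc_weight theta s
    - \sum_(s : ranking m.+1 | pos s ord0 == 0%N) pc_weight theta s
  = - ((3 * m.+1%:R - 2) / (2 * m.+1%:R)) * (theta - theta_c R m.+1).
Proof.
move=> c_ne0; have prefers1 : prefers 1%g c ord0 = false by rewrite /prefers !pos1.
rewrite !sum_pc_weight /= prefers1 pos1 eqxx mulr0 mulr1.
set M : R := (m.+1)`!%:R; set x : R := m.+1%:R.
have x_ge1 : 1 <= x by rewrite ler1n.
have M_gt0 : 0 < M by rewrite ltr0n fact_gt0.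
have prefers_card : #|[set s : ranking m.+1 | prefers s c ord0]|%:R = M / 2.
  by rewrite /M -(card_prefers c_ne0) natrM; field.
have first_card : #|[set s : ranking m.+1 | pos s ord0 == 0%N]|%:R = M / x.
  by rewrite /M -(card_first ord0) natrM -/x; field; rewrite addrC natr1 pnatr_eq0.
rewrite prefers_card first_card /theta_c -/x; field.
by rewrite [1 + _]addrC natr1 -/x -/M !gt_eqF //; lra.
Qed.

Lemma theta_c_ge0 (R : realType) {m} : (2 <= m)%N -> 0 <= theta_c R m.
Proof.
rewrite -(ler_nat R) => m_ge2; rewrite /theta_c divr_ge0 //; lra.
Qed.

Definition rival_beats {m} (i : 'I_m.+1 * bool) (s : ranking m.+1) : bool :=
  if i.2 then prefers s i.1 ord0 else pos s i.1 == 0%N.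

Lemma pc_rival_margin (R : realType) m (theta : R) (i : 'I_m.+1 * bool) :
  (1 <= m)%N -> i.1 != ord0 -> theta_c R m.+1 < theta ->
  \sum_(s | rival_beats i s) pc_weight theta s
    - \sum_(s : ranking m.+1 | pos s ord0 == 0%N) pc_weight theta s
  <= - (theta - theta_c R m.+1).
Proof.
move=> m_ge1 rival theta_gt; case: i rival => c [] /= rival.
  have x_ge2 : 2 <= m.+1%:R :> R by rewrite (ler_nat R 2).
  rewrite pc_prefers_margin // mulNr lerN2 ler_pMl ?subr_gt0 //.
  by rewrite ler_pdivlMr; lra.
rewrite pc_first_margin // lerN2 lerBlDr lerDl.
exact: theta_c_ge0.
Qed.

Lemma pc_rival_event_le {R : realType} {m} n {theta : R} {i : 'I_m.+1 * bool} :
  (1 <= m)%N -> i.1 != ord0 -> theta_c R m.+1 < theta -> theta <= 1 ->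
  \sum_(P : profile m.+1 n | (plu_score P ord0 <= #|[set v | rival_beats i (P v)]|)%N)
      pc_prob theta P
    <= expR (- ((theta - theta_c R m.+1) ^+ 2 / 4 * n%:R)).
Proof.
move=> m_ge1 rival theta_gt theta_le1.
have theta01 : 0 <= theta <= 1.
  by rewrite theta_le1 andbT ltW // (le_lt_trans (@theta_c_ge0 R m.+1 m_ge1) theta_gt).
under eq_bigr do rewrite pc_probE.
apply: (chernoff_count_le (rival_beats i) (fun s => pos s ord0 == 0%N)).
- by move=> s; exact: pc_weight_ge0.
- exact: sum_pc_weightT.
- by rewrite subr_gt0.
- exact: pc_rival_margin.
Qed.

Lemma plurality_CM_rival {m n} {tb : {set 'I_m.+1} -> 'I_m.+1} (P : profile m.+1 n) :
  tiebreak_ok tb -> CM (plurality tb) P ->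
  exists2 i, i.1 != ord0 & (plu_score P ord0 <= #|[set v | rival_beats i (P v)]|)%N.
Proof.
move=> tb_ok /(plurality_CM_cases ord0 P tb_ok) [c rival /orP [beats | beats]].
- by exists (c, false).
- by exists (c, true).
Qed.

Theorem mainTheorem14 (R : realType) (m : nat) (hm : (2 <= m)%N)
    (tb : {set 'I_m} -> 'I_m) (htb : tiebreak_ok tb) :
  exists A : R, 0 < A /\
    forall (theta : R) (n : nat),
      theta_c R m < theta -> theta <= 1 -> (1 <= n)%N ->
      rho (@plurality m n tb) theta
        <= 2 * (m`!)%:R * expR (- (A * (theta - theta_c R m) ^+ 2 * n%:R)).
Proof.
exists (1 / 4); split => [|theta n]; first by rewrite divr_gt0.
case: m hm tb htb => [//|m] m_ge2 tb tb_ok theta_gt theta_le1 _.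
rewrite div1r [4^-1 * _]mulrC; set e := expR _.
have e_ge0 : 0 <= e by exact: expR_ge0.
rewrite /rho sumr_mul_natb.
apply: le_trans (union_bound (fun i : 'I_m.+1 * bool => i.1 != ord0)
  (fun i P => plu_score P ord0 <= #|[set v | rival_beats i (P v)]|)%N _ _) _.
- move=> P; apply: pc_prob_ge0.
  by rewrite theta_le1 andbT ltW // (le_lt_trans (theta_c_ge0 _ m_ge2) theta_gt).
- by move=> P; exact: plurality_CM_rival.
apply: le_trans (ler_sum _ (fun i rival =>
  pc_rival_event_le n m_ge2 rival theta_gt theta_le1)) _.
apply: le_trans (_ : \sum_(i : 'I_m.+1 * bool) e <= _).
  rewrite [X in _ <= X](bigID (fun i => i.1 != ord0)) /= lerDl.
  by apply: sumr_ge0.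
have m_le_fact : m.+1%:R <= (m.+1)`!%:R :> R by rewrite ler_nat fact_geq.
rewrite sumr_const card_prod card_ord card_bool -[e *+ _]mulr_natr natrM; nra.
Qed.
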